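(* Let $G$ and $H$ be connected graphs, each with at least $2$ vertices. The direct product $G\times H$ is $1$-perfectly orientable if and only if one of the following holds: (i) $G\cong K_2$ and $H$ is a pseudotree, or vice versa; (ii) $G\cong P_3$ and $H\cong P_4$, or vice versa; (iii) $G\cong H\cong P_3$.
   Context: All graphs are finite and simple. An orientation of a graph $G$ is $1$-perfect if the out-neighborhood of every vertex induces a clique in $G$; $G$ is $1$-perfectly orientable if it admits a $1$-perfect orientation. The direct product $G\times H$ has vertex set $V(G)\times V(H)$, with $(u,v),(u',v')$ adjacent iff $uu'\in E(G)$ and $vv'\in E(H)$. A pseudotree is a connected graph containing at most one cycle. $P_n$ denotes the path on $n$ vertices. *)

From mathcomp Require Import all_boot.
Set Implicit Arguments. Unset Strict Implicit. Unset Printing Implicit Defensive.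

Definition simple_graph (T : finType) (e : rel T) : Prop :=
  symmetric e /\ irreflexive e.

Definition connected_graph (T : finType) (e : rel T) : Prop :=
  forall x y : T, connect e x y.

Definition graph_iso (T1 T2 : finType) (e1 : rel T1) (e2 : rel T2) : Prop :=
  exists f : T1 -> T2, bijective f /\ forall u v, e2 (f u) (f v) = e1 u v.

(* The path P_n on vertex set {0,...,n-1}; K_2 = P_2. *)
Definition path_graph (n : nat) : rel 'I_n :=
  fun i j => (i.+1 == j :> nat) || (j.+1 == i :> nat).

Arguments path_graph n : clear implicits.

Definition direct_prod (T1 T2 : finType) (e1 : rel T1) (e2 : rel T2)
  : rel (T1 * T2) :=
  fun x y => e1 x.1 y.1 && e2 x.2 y.2.

Definition is_cycle (T : finType) (e : rel T) (s : seq T) : bool :=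
  [&& uniq s, 2 < size s & cycle e s].

(* Edge set of the cycle subgraph determined by s. Two cycle sequences
   give the same cycle (subgraph) iff their edge relations coincide. *)
Definition cycle_edge (T : finType) (s : seq T) (u v : T) : bool :=
  (u \in s) && ((next s u == v) || (prev s u == v)).

(* Pseudotree: connected graph containing at most one cycle. *)
Definition pseudotree (T : finType) (e : rel T) : Prop :=
  connected_graph e /\
  forall s1 s2 : seq T, is_cycle e s1 -> is_cycle e s2 ->
    forall u v, cycle_edge s1 u v = cycle_edge s2 u v.

Definition orientation (T : finType) (e : rel T) (o : rel T) : Prop :=
  (forall u v, o u v -> e u v) /\
  (forall u v, e u v -> o u v != o v u).

Definition one_perfect (T : finType) (e : rel T) (o : rel T) : Prop :=
  orientation e o /\
  forall v x y, o v x -> o v y -> x != y -> e x y.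

Definition one_perfectly_orientable (T : finType) (e : rel T) : Prop :=
  exists o : rel T, one_perfect e o.

From mathcomp Require Import all_boot zify.
From Stdlib Require Import Classical_Prop.

Set Implicit Arguments. Unset Strict Implicit. Unset Printing Implicit Defensive.

(* If an orientation of G x H is 1-perfect and G x H is triangle-free (which holds as
   soon as one factor is), every vertex has at most one out-neighbour, so every vertex
   set W spans at most |W| edges; on the other hand S x R spans at least
   2 |E(G[S])| |E(H[R])| edges.  For G = K_2 this says that every induced subgraph of H
   has at most as many edges as vertices, which forces a connected H to be a
   pseudotree: two distinct cycles would produce a denser subgraph (a chord, an ear, or
   a path joining them).  Conversely a pseudotree has an orientation of out-degree at
   most one, which lifts to K_2 x H.  If both factors have at least three vertices,
   neither contains a triangle (K_3 x K_3 and K_3 x P_3 are not 1-perfectly orientable),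
   and counting spanning trees bounds the orders to (3,3), (3,4) or (4,3); excluding the
   claw and C_4 (via claw x P_3 and C_4 x P_3) leaves the paths.  The finitely many small
   products are settled by computation. *)

Lemma next_head (T : eqType) (x : T) r : next (x :: r) x = head x r.
Proof. by rewrite next_nth mem_head /= eqxx nth0. Qed.

Lemma prev_head (T : eqType) (x : T) r : x \notin r -> prev (x :: r) x = last x r.
Proof.
move=> xr; rewrite prev_nth mem_head memNindex //.
by rewrite -[size r]/((size (x :: r)).-1) nth_last.
Qed.

Lemma last_notin_neq (T : eqType) (x : T) r : x \notin r -> 0 < size r -> last x r != x.
Proof.
case: r => [|c r] //=; rewrite inE negb_or => /andP[xc xr] _.
by apply/eqP => Hl; move: (mem_last c r); rewrite Hl inE (negbTE xc) (negbTE xr).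
Qed.

Lemma path_rcons_head (T : Type) (e : rel T) (w x : T) b : path e w (rcons b x) -> e w (head x b).
Proof. by case: b => [|c b] /= /andP[]. Qed.

Lemma ear_neighbours_neq (T : eqType) (x w : T) a b : uniq (x :: a ++ w :: b) ->
  2 < size (x :: a ++ w :: b) -> last x a != head x b.
Proof.
have sub : subseq (x :: a ++ b) (x :: a ++ w :: b).
  exact: (cat_subseq (subseq_refl (x :: a)) (subseq_cons b w)).
move=> /(subseq_uniq sub) {sub}; rewrite cons_uniq cat_uniq mem_cat negb_or.
case/and3P=> /andP[xa xb] _ /andP[ab _].
case: a xa ab => [|c a] xa ab; case: b xb ab => [|d b] xb ab //= _.
- by apply: contraNneq xb => ->; exact: mem_head.
- by apply: contraNneq xa => <-; exact: mem_last.
- by apply: contraNneq ab => Hl; apply/hasP; exists d; rewrite ?mem_head // -Hl mem_last.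
Qed.

Section ArcCount.
Variables (T : finType) (e : rel T).
Hypotheses (esym : symmetric e) (eirr : irreflexive e).

(* [#|arcs S|] is twice the number of edges of [G[S]]. *)
Definition arcs (S : {set T}) : {set T * T} :=
  [set p | [&& p.1 \in S, p.2 \in S & e p.1 p.2]].

Definition overfull (S : {set T}) := 2 * #|S| < #|arcs S|.

Lemma adj_neq x y : e x y -> x != y.
Proof. by apply: contraTneq => ->; rewrite eirr. Qed.

Lemma arcs_set1 x : arcs [set x] = set0.
Proof.
apply/setP=> -[a b]; rewrite !inE /=.
by apply/negbTE; apply/and3P=> -[/eqP-> /eqP->]; rewrite eirr.
Qed.

Lemma arcs_setU1 (S : {set T}) w : w \notin S ->
  #|arcs S| + 2 * #|[set z in S | e w z]| <= #|arcs (w |: S)|.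
Proof.
move=> wS; set N := [set z in S | e w z].
set B := [set (w, z) | z in N]; set C := [set (z, w) | z in N].
have cardB : #|B| = #|N| by apply: card_imset => x y [].
have cardC : #|C| = #|N| by apply: card_imset => x y [].
have disjAB : arcs S :&: B = set0.
  apply/setP=> p; rewrite !inE; apply/negbTE/andP => -[/and3P[p1S _ _]].
  by case/imsetP=> z _ Hp; rewrite Hp /= (negbTE wS) in p1S.
have disjABC : (arcs S :|: B) :&: C = set0.
  apply/setP=> p; rewrite !inE; apply/negbTE/andP => -[/orP[]].
    by case/and3P=> _ p2S _ /imsetP[z _ Hp]; rewrite Hp /= (negbTE wS) in p2S.
  case/imsetP=> z zN -> /imsetP[z' _ [_ zw]].
  by move: zN; rewrite zw inE (negbTE wS).
have -> : #|arcs S| + 2 * #|N| = #|arcs S :|: B :|: C|.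
  by rewrite !cardsU disjABC disjAB !cards0 !subn0 cardB cardC mul2n -addnn addnA.
apply: subset_leq_card; apply/subsetP => p; rewrite !inE => /orP[/orP[|]|].
- by case/and3P=> -> -> ->; rewrite !orbT.
- by case/imsetP=> z; rewrite inE => /andP[zS ewz] ->; rewrite /= eqxx zS ewz orbT.
- by case/imsetP=> z; rewrite inE => /andP[zS ewz] ->; rewrite /= eqxx zS esym ewz orbT.
Qed.

Lemma arcs_setU1_neighbour (S : {set T}) w z k : w \notin S -> z \in S -> e w z ->
  2 * #|S| <= #|arcs S| + k -> 2 * #|w |: S| <= #|arcs (w |: S)| + k.
Proof.
move=> wS zS ewz; have := arcs_setU1 wS; rewrite cardsU1 wS.
have : 0 < #|[set z in S | e w z]| by apply/card_gt0P; exists z; rewrite inE zS.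
lia.
Qed.

Lemma arcs_setU1_two_neighbours (S : {set T}) w a b k : w \notin S -> a \in S -> b \in S ->
  a != b -> e w a -> e w b ->
  2 * #|S| <= #|arcs S| + k -> 2 * #|w |: S| + 2 <= #|arcs (w |: S)| + k.
Proof.
move=> wS aS bS ab ewa ewb; have := arcs_setU1 wS; rewrite cardsU1 wS.
have : 2 <= #|[set z in S | e w z]|.
  have <- : #|[set a; b]| = 2 by rewrite cards2 ab.
  apply: subset_leq_card.
  by apply/subsetP=> x; rewrite !inE => /orP[]/eqP->; rewrite ?aS ?bS ?ewa ?ewb.
lia.
Qed.

Lemma overfull_setU1_two_neighbours (S : {set T}) w a b : w \notin S -> a \in S ->
  b \in S -> a != b -> e w a -> e w b -> 2 * #|S| <= #|arcs S| -> overfull (w |: S).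
Proof.
move=> wS aS bS ab ewa ewb HS.
by have := arcs_setU1_two_neighbours (k := 0) wS aS bS ab ewa ewb; rewrite !addn0 /overfull; lia.
Qed.

Lemma arcs_setU_path l z (S : {set T}) k : z \in S -> path e z l ->
  2 * #|S| <= #|arcs S| + k ->
  2 * #|S :|: [set x in l]| <= #|arcs (S :|: [set x in l])| + k.
Proof.
elim: l z S => [|y l IH] z S zS /=.
  by move=> _; rewrite (_ : [set x in [::]] = set0) ?setU0 // -setP => x; rewrite !inE.
case/andP=> ezy pl HS.
have -> : S :|: [set x in y :: l] = (y |: S) :|: [set x in l].
  by apply/setP=> x; rewrite !inE orbCA orbA.
apply: (IH y) => //; first exact: setU11.
case yS: (y \in S); first by rewrite (setUidPr (_ : [set y] \subset S)) ?sub1set.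
by apply: (arcs_setU1_neighbour (z := z)); rewrite ?yS // esym.
Qed.

Lemma is_cycle_rot_to (s : seq T) x : is_cycle e s -> x \in s -> exists r,
  [/\ is_cycle e (x :: r), s =i x :: r, next s =1 next (x :: r) & prev s =1 prev (x :: r)].
Proof.
case/and3P=> us ss cs xs; case: (rot_to xs) => i r Hr; exists r; rewrite -Hr; split.
- by rewrite /is_cycle rot_uniq size_rot rot_cycle us ss cs.
- by move=> y; rewrite mem_rot.
- by move=> y; rewrite next_rot.
- by move=> y; rewrite prev_rot.
Qed.

Lemma cycle_adj (s : seq T) u v : is_cycle e s -> cycle_edge s u v -> e u v.
Proof.
case/and3P=> _ _ cs /andP[us /orP[] /eqP <-]; first exact: next_cycle cs us.
by rewrite esym; exact: prev_cycle cs us.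
Qed.

Lemma arcs_cycle (s : seq T) : is_cycle e s -> 2 * #|[set y in s]| <= #|arcs [set y in s]|.
Proof.
case: s => [|x r] /and3P[us ss cs] //.
case/lastP: r us ss cs => [|r q] //.
rewrite /= !rcons_path last_rcons rcons_uniq mem_rcons inE negb_or size_rcons.
case/and3P=> /andP[xq xr] qr _ ss /andP[/andP[pr elq] eqx].
have H0 : 2 * #|[set x]| <= #|arcs [set x]| + 2 by rewrite cards1 arcs_set1 cards0.
have H1 := arcs_setU_path (set11 x) pr H0; set S := _ :|: _ in H1.
have qS : q \notin S by rewrite !inE negb_or eq_sym xq qr.
have lS : last x r \in S by move: (mem_last x r); rewrite !inE => /orP[] ->; rewrite ?orbT.
have xS : x \in S by rewrite !inE eqxx.
have lx : last x r != x by apply: last_notin_neq => //; lia.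
have eql : e q (last x r) by rewrite esym.
have := arcs_setU1_two_neighbours qS lS xS lx eql eqx H1.
have -> : q |: S = [set y in x :: rcons r q].
  by apply/setP=> y; rewrite !inE mem_rcons inE orbCA.
by rewrite leq_add2r.
Qed.

Lemma split_last_outside (S : {set T}) (r : seq T) : has (fun y => y \notin S) r ->
  exists a w b, [/\ r = a ++ w :: b, w \notin S & all (fun y => y \in S) b].
Proof.
elim/last_ind: r => [|r z IH] //=; rewrite has_rcons.
case zS: (z \in S) => /= H.
  case: (IH H) => a [w [b [-> wS ab]]]; exists a, w, (rcons b z).
  by rewrite rcons_cat rcons_cons all_rcons zS ab.
by exists r, z, [::]; rewrite cats1 zS.
Qed.

(* Walking along a cycle from a vertex of S to the last vertex [w] outside S, every
   new vertex has a neighbour already present, and [w] has two. *)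
Lemma ear_overfull (S : {set T}) x r : 2 * #|S| <= #|arcs S| -> is_cycle e (x :: r) ->
  x \in S -> has (fun y => y \notin S) r -> exists S', overfull S'.
Proof.
move=> HS ct xS /split_last_outside[a [w [b [Er wS bS]]]]; subst r.
case/and3P: ct => ut st; rewrite /= rcons_cat rcons_cons cat_path /=.
case/andP=> pa /andP[ew pb].
have HS0 : 2 * #|S| <= #|arcs S| + 0 by rewrite addn0.
have := arcs_setU_path xS pa HS0; rewrite addn0; set S1 := _ :|: _ => H1.
have wS1 : w \notin S1.
  rewrite !inE negb_or wS /=; move: ut; rewrite /= cat_uniq => /andP[_ /and3P[_ /norP[] ]].
  by [].
have lS1 : last x a \in S1.
  by move: (mem_last x a); rewrite !inE => /orP[/eqP->|->]; rewrite ?xS ?orbT.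
have hS1 : head x b \in S1.
  by rewrite inE; case: b bS {pb ut st} => [|c b] /=; [rewrite xS | case/andP=> ->].
exists (w |: S1); apply: overfull_setU1_two_neighbours wS1 lS1 hS1 _ _ _ H1.
- exact: ear_neighbours_neq ut st.
- by rewrite esym.
- exact: path_rcons_head pb.
Qed.

Lemma cycle_ear_overfull (S : {set T}) t x y : 2 * #|S| <= #|arcs S| -> is_cycle e t ->
  x \in t -> x \in S -> y \in t -> y \notin S -> exists S', overfull S'.
Proof.
move=> HS ct xt xS yt yS; have [r [cr mr _ _]] := is_cycle_rot_to ct xt.
apply: (ear_overfull HS cr xS); apply/hasP; exists y => //.
by move: yt; rewrite mr inE => /predU1P[Ey|//]; rewrite Ey xS in yS.
Qed.

(* A chord [uv] splits the cycle into a shorter cycle through [uv] and an ear. *)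
Lemma chord_overfull (s : seq T) u v : is_cycle e s -> u \in s -> v \in s -> e u v ->
  next s u != v -> prev s u != v -> exists S, overfull S.
Proof.
move=> cs us vs euv; have uv := adj_neq euv.
have [r [cr mr -> ->]] := is_cycle_rot_to cs us.
have ur : u \notin r by case/and3P: cr => /andP[].
rewrite next_head prev_head //.
have vr : v \in r by move: vs; rewrite mr inE eq_sym (negbTE uv).
case/splitPr: vr mr cr ur => r1 r2 mr cr ur hn hp.
case: r1 mr cr ur hn hp => [|c r1] mr cr ur hn hp; first by rewrite eqxx in hn.
case: r2 mr cr ur hp {hn} => [|y r2] mr cr ur hp; first by rewrite last_cat eqxx in hp.
case/and3P: cr => ucr scr ccr.
set c1 := u :: rcons (c :: r1) v.
have sub1 : subseq c1 (u :: (c :: r1) ++ v :: y :: r2).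
  by rewrite /c1 -cats1; exact: (cat_subseq (subseq_refl (u :: c :: r1)) (prefix_subseq [:: v] _)).
have cc1 : is_cycle e c1.
  rewrite /is_cycle (subseq_uniq sub1 ucr) /c1 /= size_rcons.
  move: ccr; rewrite /= rcons_cat cat_path /= => /and5P[euc pr1 elv _ _].
  by rewrite !rcons_path last_rcons euc pr1 elv esym euv.
apply: cycle_ear_overfull (arcs_cycle cc1) cs us _ (_ : y \in s) _.
- by rewrite inE mem_head.
- by rewrite mr !(inE, mem_cat) eqxx !orbT.
have : uniq (c1 ++ y :: r2) by rewrite /c1 -cats1 cat_cons -catA.
by rewrite cat_uniq inE => /and3P[_ /norP[]].
Qed.

Lemma dense_extend_along_path (S : {set T}) (A : pred T) x p : 2 * #|S| <= #|arcs S| ->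
  (forall a, A a -> a \notin S) -> x \in S -> path e x p -> A (last x p) ->
  exists (S' : {set T}) w, [/\ 2 * #|S'| <= #|arcs S'|, w \in S', A w
                             & forall a, A a -> a != w -> a \notin S'].
Proof.
elim: p x S => [|y p IH] x S HS HA xS /=; first by move=> _ /HA; rewrite xS.
case/andP=> exy pp Al.
have HyS : 2 * #|y |: S| <= #|arcs (y |: S)|.
  case yS: (y \in S); first by rewrite (setUidPr (_ : [set y] \subset S)) ?sub1set.
  rewrite -[#|arcs (y |: S)|]addn0; apply: (@arcs_setU1_neighbour S y x 0); rewrite ?yS ?addn0 //.
  by rewrite esym.
have [Ay | nAy] := boolP (A y).
  exists (y |: S), y; split; rewrite ?setU11 // => a Aa ay.
  by rewrite !inE negb_or ay HA.
apply: (IH y (y |: S) HyS _ (setU11 y S) pp Al) => a Aa.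
by rewrite !inE negb_or HA // andbT; apply: contraNneq nAy => <-.
Qed.

Lemma cycle_outside_overfull (conn : connected_graph e) (S : {set T}) x0 t y :
  2 * #|S| <= #|arcs S| -> x0 \in S -> is_cycle e t -> y \in t -> y \notin S ->
  exists S', overfull S'.
Proof.
move=> HS x0S ct yt yS.
have [/existsP[x /andP[xt xS]] | /existsPn disj] := boolP [exists x, (x \in t) && (x \in S)].
  exact: cycle_ear_overfull HS ct xt xS yt yS.
have /connectP[p pp Hl] := conn x0 y.
have HA a : a \in t -> a \notin S by move=> at'; have := disj a; rewrite at'.
have lt : last x0 p \in t by rewrite -Hl.
have [S' [w [HS' wS' wt Hout]]] := dense_extend_along_path (A := mem t) HS HA x0S pp lt.
have ewz : e w (next t w) by apply: next_cycle wt; case/and3P: ct.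
have zt : next t w \in t by rewrite mem_next.
have zw : next t w != w by rewrite eq_sym adj_neq.
exact: cycle_ear_overfull HS' ct wt wS' zt (Hout _ zt zw).
Qed.

Lemma cycle_edge_sub (conn : connected_graph e)
  (sparse : forall S, #|arcs S| <= 2 * #|S|) s t u v :
  is_cycle e s -> is_cycle e t -> cycle_edge t u v -> cycle_edge s u v.
Proof.
move=> cs ct tuv; apply/negPn/negP => suv.
suff [S] : exists S, overfull S by rewrite /overfull ltnNge sparse.
have euv := cycle_adj ct tuv.
have [ut vt] : u \in t /\ v \in t.
  by case/andP: tuv => ut /orP[] /eqP <-; rewrite ?mem_next ?mem_prev.
have outside y : y \in t -> y \notin s -> exists S, overfull S.
  have [x0 x0s] : exists x0, x0 \in s.
    by case: s cs {suv} => [|x0 s'] // _; exists x0; exact: mem_head.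
  move=> yt ys; apply: (cycle_outside_overfull conn (arcs_cycle cs) (x0 := x0) _ ct yt);
    by rewrite inE.
have [us | /(outside u ut) //] := boolP (u \in s).
have [vs | /(outside v vt) //] := boolP (v \in s).
by apply: (chord_overfull cs us vs euv); apply: contra suv => /eqP uv;
  rewrite /cycle_edge us uv eqxx ?orbT.
Qed.

Lemma sparse_pseudotree : connected_graph e -> (forall S, #|arcs S| <= 2 * #|S|) -> pseudotree e.
Proof.
move=> conn sparse; split=> // s1 s2 c1 c2 u v.
by apply/idP/idP; apply: cycle_edge_sub.
Qed.

Lemma path_exit (S : {set T}) x p : x \in S -> path e x p -> last x p \notin S ->
  exists z w, [/\ z \in S, w \notin S & e z w].
Proof.
elim: p x => [|y p IH] x xS /=; first by rewrite xS.
case/andP=> exy pp Hl; case yS: (y \in S); first exact: (IH y).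
by exists x, y; rewrite yS.
Qed.

Lemma connected_exit (conn : connected_graph e) (S : {set T}) x y :
  x \in S -> y \notin S -> exists z w, [/\ z \in S, w \notin S & e z w].
Proof.
by move=> xS yS; have /connectP[p pp Hl] := conn x y; apply: (path_exit xS pp); rewrite -Hl.
Qed.

Lemma card_lt_notin (S : {set T}) : #|S| < #|T| -> exists y, y \notin S.
Proof.
move=> ltS; apply/existsP; apply: contraTT ltS => /existsPn inS.
by rewrite -leqNgt -cardsT subset_leq_card //; apply/subsetP => y _; apply/negPn.
Qed.

(* Grow a spanning tree of a connected graph one vertex at a time. *)
Lemma connected_arcs_subset (conn : connected_graph e) k : 0 < k <= #|T| ->
  exists S : {set T}, #|S| = k /\ 2 * k.-1 <= #|arcs S|.
Proof.
elim: k => [|[|k] IH] // /andP[_ kT].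
  have [x _] : exists x, x \in [set: T] by apply/card_gt0P; rewrite cardsT.
  by exists [set x]; rewrite cards1.
have [S [cS HS]] := IH (ltnW kT).
have [y yS] : exists y, y \notin S by apply: card_lt_notin; rewrite cS.
have [x xS] : exists x, x \in S by apply/card_gt0P; rewrite cS.
have [z [w [zS wS ezw]]] := connected_exit conn xS yS.
exists (w |: S); split; first by rewrite cardsU1 wS cS.
have := arcs_setU1 wS.
have : 0 < #|[set z in S | e w z]| by apply/card_gt0P; exists z; rewrite inE zS esym.
by move: HS => /=; lia.
Qed.

End ArcCount.

Definition triangle_free (T : finType) (e : rel T) :=
  forall a b c, e a b -> e b c -> e a c -> False.

(* In a triangle-free graph every vertex has at most one out-neighbour, so an arc
   [(x, y)] is determined by its tail when [x -> y] and by its head otherwise. *)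
Lemma one_perfect_arcs (T : finType) (e o : rel T) (W : {set T}) :
  one_perfect e o -> triangle_free e -> #|arcs e W| <= 2 * #|W|.
Proof.
case=> [[oe ori] op] tf.
pose f (p : T * T) := if o p.1 p.2 then (p.1, true) else (p.2, false).
have inj : {in arcs e W &, injective f}.
  move=> [p1 p2] [q1 q2]; rewrite !inE /= => /and3P[p1W p2W ep] /and3P[q1W q2W eq].
  rewrite /f /=; case Hp: (o p1 p2); case Hq: (o q1 q2) => // -[E1].
    subst q1; case: (eqVneq p2 q2) => [-> //|npq].
    by case: (tf _ _ _ ep (op _ _ _ Hp Hq npq) eq).
  subst q2.
  have Hp' : o p2 p1 by move: (ori _ _ ep); rewrite Hp; case: (o p2 p1).
  have Hq' : o p2 q1 by move: (ori _ _ eq); rewrite Hq; case: (o p2 q1).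
  case: (eqVneq p1 q1) => [-> //|npq].
  by case: (tf _ _ _ (oe _ _ Hp') (op _ _ _ Hp' Hq' npq) (oe _ _ Hq')).
rewrite -(card_in_imset inj) (_ : 2 * #|W| = #|setX W [set: bool]|); last first.
  by rewrite cardsX cardsT card_bool mulnC.
apply: subset_leq_card; apply/subsetP=> x /imsetP[[p1 p2]].
by rewrite !inE /= => /and3P[p1W p2W _] ->; rewrite /f; case: (o p1 p2); rewrite /= ?inE ?p1W ?p2W.
Qed.

Lemma arcs_direct_prod (T1 T2 : finType) (e1 : rel T1) (e2 : rel T2) S R :
  #|arcs e1 S| * #|arcs e2 R| <= #|arcs (direct_prod e1 e2) (setX S R)|.
Proof.
rewrite -cardsX.
pose g (pq : (T1 * T1) * (T2 * T2)) := ((pq.1.1, pq.2.1), (pq.1.2, pq.2.2)).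
have ginj : injective g by move=> [[a b] [c d]] [[a' b'] [c' d']] [-> -> -> ->].
rewrite -(card_imset _ ginj); apply: subset_leq_card; apply/subsetP => x.
case/imsetP=> [[[a b] [c d]]]; rewrite !inE /= => /andP[/and3P[aS bS eab] /and3P[cR dR ecd]] ->.
by rewrite /= aS bS cR dR /direct_prod /= eab ecd.
Qed.

(* A triangle of [G x H] projects onto triangles of both factors. *)
Lemma one_perfect_direct_prod_arcs (T1 T2 : finType) (e1 : rel T1) (e2 : rel T2) o S R :
  one_perfect (direct_prod e1 e2) o -> triangle_free e1 \/ triangle_free e2 ->
  #|arcs e1 S| * #|arcs e2 R| <= 2 * (#|S| * #|R|).
Proof.
move=> op tf; rewrite -[#|S| * _]cardsX; apply: leq_trans (arcs_direct_prod e1 e2 S R) _.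
apply: (one_perfect_arcs _ op) => -[a1 a2] [b1 b2] [c1 c2]; rewrite /direct_prod /=.
case/andP=> ab1 ab2 /andP[bc1 bc2] /andP[ac1 ac2].
by case: tf => tf; [exact: (tf a1 b1 c1) | exact: (tf a2 b2 c2)].
Qed.

Definition induced_subgraph (A T : finType) (eA : rel A) (e : rel T) :=
  exists f : A -> T, injective f /\ forall x y, e (f x) (f y) = eA x y.

Lemma induced_1po (A T : finType) (eA : rel A) (e : rel T) :
  induced_subgraph eA e -> one_perfectly_orientable e -> one_perfectly_orientable eA.
Proof.
move=> [f [finj Hf]] [o [[oe ori] op]]; exists (fun x y => o (f x) (f y)); split; [split|].
- by move=> u v /oe; rewrite Hf.
- by move=> u v; rewrite -Hf; exact: ori.
- by move=> v x y ovx ovy xy; rewrite -Hf; apply: op ovx ovy _; rewrite (inj_eq finj).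
Qed.

Lemma induced_direct_prod (A B T1 T2 : finType) (eA : rel A) (eB : rel B) (e1 : rel T1)
  (e2 : rel T2) : induced_subgraph eA e1 -> induced_subgraph eB e2 ->
  induced_subgraph (direct_prod eA eB) (direct_prod e1 e2).
Proof.
move=> [f [finj Hf]] [g [ginj Hg]]; exists (fun p => (f p.1, g p.2)); split.
  by move=> [a b] [c d] /= [/finj -> /ginj ->].
by move=> [a b] [c d]; rewrite /direct_prod /= Hf Hg.
Qed.

Lemma direct_prodC_1po (T1 T2 : finType) (e1 : rel T1) (e2 : rel T2) :
  one_perfectly_orientable (direct_prod e1 e2) -> one_perfectly_orientable (direct_prod e2 e1).
Proof.
apply: induced_1po; exists (fun p => (p.2, p.1)); split.
  by move=> [a b] [c d] /= [-> ->].
by move=> [a b] [c d]; rewrite /direct_prod /= andbC.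
Qed.

Lemma graph_iso_induced (A T : finType) (eA : rel A) (e : rel T) :
  graph_iso e eA -> induced_subgraph e eA.
Proof. by case=> f [fb Hf]; exists f; split; first exact: bij_inj. Qed.

Lemma induced_graph_iso (A T : finType) (eA : rel A) (e : rel T) :
  induced_subgraph eA e -> #|A| = #|T| -> graph_iso e eA.
Proof.
move=> [f [finj Hf]] cA; have [g fg gf] : bijective f by apply: inj_card_bij; rewrite ?cA.
by exists g; split; [exists f | move=> u v; rewrite -Hf !gf].
Qed.

Section Forcing.
Variables (V : finType) (e : rel V) (vs : seq V).

(* If [v -> x] and [z] is a neighbour of [v] other than [x] and not adjacent to [x],
   then [v -> z] would put the non-edge [xz] in the out-neighbourhood of [v]: so [z -> v]. *)
Definition forces (a : V * V) (z : V) := [&& e a.1 z, z != a.2 & ~~ e a.2 z].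

Definition force_step (A : seq (V * V)) : seq (V * V) :=
  undup (A ++ [seq (z, a.1) | a <- A, z <- [seq z <- vs | forces a z]]).

Definition has_opposite (A : seq (V * V)) := has (fun a => (a.2, a.1) \in A) A.

Definition unorientable_edge a b n := [&& e a b,
  has_opposite (iter n force_step [:: (a, b)]) & has_opposite (iter n force_step [:: (b, a)])].

Lemma unorientable_edgeP a b n : unorientable_edge a b n -> ~ one_perfectly_orientable e.
Proof.
case/and3P=> eab c1 c2 [o [[oe ori] op]].
pose oriented (A : seq (V * V)) := forall p, p \in A -> o p.1 p.2.
have step A : oriented A -> oriented (force_step A).
  move=> HA p; rewrite mem_undup mem_cat => /orP[/HA //|].
  case/allpairsPdep=> q [z [qA zin ->]] /=.
  move: zin; rewrite mem_filter => /andP[/and3P[eqz zq nez] _].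
  have oq := HA q qA; have nqz : o q.1 z = false.
    by apply: contraNF nez => oqz; apply: op oq oqz _; rewrite eq_sym.
  by move: (ori _ _ eqz); rewrite nqz; case: (o z q.1).
have iter_step m A : oriented A -> oriented (iter m force_step A).
  by elim: m => [|m IH] //= HA; apply: step; apply: IH.
have no_opp A : oriented A -> ~~ has_opposite A.
  move=> HA; apply/hasP => -[p pA qA].
  by move: (ori _ _ (oe _ _ (HA p pA))); rewrite (HA p pA) (HA _ qA).
have single x y : o x y -> oriented [:: (x, y)] by move=> oxy p; rewrite inE => /eqP ->.
have := ori a b eab; case Hab: (o a b) => /= H.
  by move: (no_opp _ (iter_step n _ (single _ _ Hab))); rewrite c1.
have Hba : o b a by move: H; case: (o b a).
by move: (no_opp _ (iter_step n _ (single _ _ Hba))); rewrite c2.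
Qed.

Definition one_perfectb (o : rel V) :=
  [&& all (fun u => all (fun v => o u v ==> e u v) vs) vs,
      all (fun u => all (fun v => e u v ==> (o u v != o v u)) vs) vs &
      all (fun v => all (fun x => all (fun y =>
        o v x ==> o v y ==> (x != y) ==> e x y) vs) vs) vs].

Lemma one_perfectbP o : (forall v, v \in vs) -> one_perfectb o -> one_perfectly_orientable e.
Proof.
move=> cov /and3P[/allP H1 /allP H2 /allP H3]; exists o; split; [split|].
- by move=> u v; have /allP/(_ v (cov v))/implyP := H1 u (cov u).
- by move=> u v; have /allP/(_ v (cov v))/implyP := H2 u (cov u).
- move=> v x y ovx ovy xy.
  have /allP/(_ x (cov x))/allP/(_ y (cov y)) := H3 v (cov v).
  by move=> /implyP/(_ ovx)/implyP/(_ ovy)/implyP/(_ xy).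
Qed.

End Forcing.

Definition K3 : rel 'I_3 := fun i j => val i != val j.
Definition claw : rel 'I_4 := fun i j => (val i != val j) && ((val i == 0) || (val j == 0)).
Definition C4 : rel 'I_4 := fun i j => (i.+1 %% 4 == j) || (j.+1 %% 4 == i).

(* [ord_enum] does not reduce under [vm_compute], hence these explicit enumerations. *)
Definition ords3 : seq 'I_3 := [:: @Ordinal 3 0 isT; @Ordinal 3 1 isT; @Ordinal 3 2 isT].
Definition ords4 : seq 'I_4 :=
  [:: @Ordinal 4 0 isT; @Ordinal 4 1 isT; @Ordinal 4 2 isT; @Ordinal 4 3 isT].

Lemma mem_ords3 i : i \in ords3.
Proof. by case: i => [[|[|[|n]]] Hi]. Qed.

Lemma mem_ords4 i : i \in ords4.
Proof. by case: i => [[|[|[|[|n]]]] Hi]. Qed.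

Definition pairs (A B : Type) (s1 : seq A) (s2 : seq B) := [seq (x, y) | x <- s1, y <- s2].

Lemma mem_pairs (A B : eqType) (s1 : seq A) (s2 : seq B) x :
  x.1 \in s1 -> x.2 \in s2 -> x \in pairs s1 s2.
Proof. by case: x => a b /= as1 bs2; apply/allpairsP; exists (a, b). Qed.

Definition ord_one {n} : 'I_n.+2 := @Ordinal n.+2 1 isT.

Lemma K3_K3_not_1po : ~ one_perfectly_orientable (direct_prod K3 K3).
Proof.
apply: (@unorientable_edgeP _ _ (pairs ords3 ords3)
  (ord0, ord0) (ord_one, ord_one) 10).
by vm_compute.
Qed.

Lemma K3_P3_not_1po : ~ one_perfectly_orientable (direct_prod K3 (path_graph 3)).
Proof.
apply: (@unorientable_edgeP _ _ (pairs ords3 ords3)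
  (ord0, ord0) (ord_one, ord_one) 10).
by vm_compute.
Qed.

Lemma claw_P3_not_1po : ~ one_perfectly_orientable (direct_prod claw (path_graph 3)).
Proof.
apply: (@unorientable_edgeP _ _ (pairs ords4 ords3)
  (ord0, ord0) (ord_one, ord_one) 10).
by vm_compute.
Qed.

Lemma C4_P3_not_1po : ~ one_perfectly_orientable (direct_prod C4 (path_graph 3)).
Proof.
apply: (@unorientable_edgeP _ _ (pairs ords4 ords3)
  (ord0, ord0) (ord_one, ord_one) 10).
by vm_compute.
Qed.

(* Each quadruple [(a, b, c, d)] is the arc [(a, b) -> (c, d)]. *)
Definition orient_by (m n : nat) (arcs : seq (nat * nat * nat * nat)) : rel ('I_m * 'I_n) :=
  fun u v => (val u.1, val u.2, val v.1, val v.2) \in arcs.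

Lemma P3_P3_1po : one_perfectly_orientable (direct_prod (path_graph 3) (path_graph 3)).
Proof.
apply: (@one_perfectbP _ _ (pairs ords3 ords3) (orient_by
  [:: (0,1,1,2); (0,2,1,1); (1,0,0,1); (1,1,0,0); (1,2,2,1); (2,0,1,1); (2,1,1,0); (2,2,1,1)])).
  by move=> x; apply: mem_pairs; rewrite ?mem_ords3.
by vm_compute.
Qed.

Lemma P3_P4_1po : one_perfectly_orientable (direct_prod (path_graph 3) (path_graph 4)).
Proof.
apply: (@one_perfectbP _ _ (pairs ords3 ords4) (orient_by
  [:: (0,0,1,1); (0,1,1,2); (0,2,1,3); (0,3,1,2); (1,0,0,1); (1,1,0,2); (1,2,2,1); (1,3,2,2);
      (2,0,1,1); (2,1,1,0); (2,2,1,1); (2,3,1,2)])).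
  by move=> x; apply: mem_pairs; rewrite ?mem_ords3 ?mem_ords4.
by vm_compute.
Qed.

Section SmallSubgraphs.
Variables (T : finType) (e : rel T).
Hypotheses (esym : symmetric e) (eirr : irreflexive e).

Lemma induced_of_seq n (R : rel 'I_n) (l : seq T) a : uniq l -> size l = n ->
  (forall i j : 'I_n, e (nth a l i) (nth a l j) = R i j) -> induced_subgraph R e.
Proof.
move=> ul sl H; exists (fun i : 'I_n => nth a l i); split=> // i j /eqP.
by rewrite nth_uniq ?sl // => /eqP; apply: ord_inj.
Qed.

Ltac adj_cases := solve [ done | by rewrite esym | by rewrite eirr | by apply/negbTE
                        | by rewrite esym; apply/negbTE ].

Lemma induced_K3 a b c : e a b -> e b c -> e a c -> induced_subgraph K3 e.
Proof.
move=> eab ebc eac; apply: (@induced_of_seq 3 K3 [:: a; b; c] a) => //.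
  by rewrite /= !inE negb_or !(adj_neq eirr).
by move=> [[|[|[|i]]] Hi] [[|[|[|j]]] Hj] //=; rewrite /K3 /=; adj_cases.
Qed.

Lemma induced_P3 a b c : e a b -> e b c -> ~~ e a c -> a != c -> induced_subgraph (path_graph 3) e.
Proof.
move=> eab ebc eac ac; apply: (@induced_of_seq 3 _ [:: a; b; c] a) => //.
  by rewrite /= !inE negb_or ac !(adj_neq eirr).
by move=> [[|[|[|i]]] Hi] [[|[|[|j]]] Hj] //=; rewrite /path_graph /=; adj_cases.
Qed.

Lemma induced_P2 a b : e a b -> induced_subgraph (path_graph 2) e.
Proof.
move=> eab; apply: (@induced_of_seq 2 _ [:: a; b] a) => //.
  by rewrite /= !inE (adj_neq eirr eab).
by move=> [[|[|i]] Hi] [[|[|j]] Hj] //=; rewrite /path_graph /=; adj_cases.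
Qed.

Lemma induced_claw c x y z : e c x -> e c y -> e c z -> ~~ e x y -> ~~ e x z -> ~~ e y z ->
  x != y -> x != z -> y != z -> induced_subgraph claw e.
Proof.
move=> ecx ecy ecz exy exz eyz xy xz yz; apply: (@induced_of_seq 4 _ [:: c; x; y; z] c) => //.
  by rewrite /= !inE !negb_or xy xz yz !(adj_neq eirr).
by move=> [[|[|[|[|i]]]] Hi] [[|[|[|[|j]]]] Hj] //=; rewrite /claw /=; adj_cases.
Qed.

Lemma induced_C4 x v y w : e x v -> e v y -> e y w -> e w x -> ~~ e x y -> ~~ e v w ->
  x != y -> v != w -> induced_subgraph C4 e.
Proof.
move=> exv evy eyw ewx exy evw xy vw; apply: (@induced_of_seq 4 _ [:: x; v; y; w] x) => //.
  have xw : x != w by rewrite eq_sym (adj_neq eirr ewx).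
  by rewrite /= !inE !negb_or xy xw vw !(adj_neq eirr).
by move=> [[|[|[|[|i]]]] Hi] [[|[|[|[|j]]]] Hj] //=; rewrite /C4 /=; adj_cases.
Qed.

Lemma induced_P4 a b c d : e a b -> e b c -> e c d -> ~~ e a c -> ~~ e a d -> ~~ e b d ->
  a != c -> a != d -> b != d -> induced_subgraph (path_graph 4) e.
Proof.
move=> eab ebc ecd eac ead ebd ac ad bd; apply: (@induced_of_seq 4 _ [:: a; b; c; d] a) => //.
  by rewrite /= !inE !negb_or ac ad bd !(adj_neq eirr).
by move=> [[|[|[|[|i]]]] Hi] [[|[|[|[|j]]]] Hj] //=; rewrite /path_graph /=; adj_cases.
Qed.

Lemma seq_notin (s : seq T) : size s < #|T| -> exists w, w \notin s.
Proof.
move=> lts; have [w] : exists w, w \notin [set x in s].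
  by apply: card_lt_notin; rewrite cardsE (leq_ltn_trans (card_size s) lts).
by rewrite inE; exists w.
Qed.

Lemma uniq_size_card_mem (s : seq T) : uniq s -> size s = #|T| -> forall z, z \in s.
Proof.
move=> us cs z; apply/negPn/negP => zs.
by have := max_card (mem (z :: s)); rewrite (card_uniqP _) /= ?zs // cs ltnn.
Qed.

Hypothesis conn : connected_graph e.

Lemma two_neighbours : 2 < #|T| -> exists v x y, [/\ x != y, e v x & e v y].
Proof.
move=> cT; have [x _] : exists x, x \in [set: T] by apply/card_gt0P; rewrite cardsT ltnW // ltnW.
have [y yx] : exists y, y \notin [set x] by apply: card_lt_notin; rewrite cards1 ltnW.
have [a [b [/set1P-> bx exb]]] := connected_exit conn (set11 x) yx.
have [c cab] : exists c, c \notin [set x; b].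
  by apply: card_lt_notin; apply: leq_ltn_trans cT; rewrite cards2 ltnS leq_b1.
have [z [w [zab wab ezw]]] := connected_exit conn (setU11 x _) cab.
move: wab zab; rewrite !inE negb_or => /andP[wx wb] /orP[] /eqP zE; rewrite zE in ezw.
  by exists x, b, w; rewrite eq_sym.
by exists b, x, w; rewrite eq_sym esym.
Qed.

Lemma induced_K3_or_P3 : 2 < #|T| ->
  induced_subgraph K3 e \/ induced_subgraph (path_graph 3) e.
Proof.
move=> cT; have [v [x [y [xy evx evy]]]] := two_neighbours cT.
have exv : e x v by rewrite esym.
case exy: (e x y); first by left; apply: (induced_K3 exv evy exy).
by right; apply: (induced_P3 exv evy); rewrite ?exy.
Qed.

Lemma triangle_free_P3 : triangle_free e -> 2 < #|T| ->
  exists a b c, [/\ e a b, e b c, ~~ e a c & a != c].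
Proof.
move=> tf cT; have [v [x [y [xy evx evy]]]] := two_neighbours cT.
exists x, v, y; rewrite esym evx evy xy; split=> //.
by apply/negP=> exy; apply: (tf x v y); rewrite // esym.
Qed.

Lemma triangle_free_induced_P3 : triangle_free e -> 2 < #|T| ->
  induced_subgraph (path_graph 3) e.
Proof.
by move=> tf /(triangle_free_P3 tf)[a [b [c [eab ebc eac ac]]]]; apply: induced_P3 eab ebc eac ac.
Qed.

Lemma graph_iso_P2 : #|T| = 2 -> graph_iso e (path_graph 2).
Proof.
move=> cT; have [x _] : exists x, x \in [set: T] by apply/card_gt0P; rewrite cardsT cT.
have [y yx] : exists y, y \notin [set x] by apply: card_lt_notin; rewrite cards1 cT.
have [a [b [_ _ eab]]] := connected_exit conn (set11 x) yx.
by apply: induced_graph_iso (induced_P2 eab) _; rewrite card_ord cT.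
Qed.

Lemma graph_iso_P3 : triangle_free e -> #|T| = 3 -> graph_iso e (path_graph 3).
Proof.
move=> tf cT; have gt2 : 2 < #|T| by rewrite cT.
have [a [b [c [eab ebc eac ac]]]] := triangle_free_P3 tf gt2.
by apply: induced_graph_iso (induced_P3 eab ebc eac ac) _; rewrite card_ord cT.
Qed.

Lemma graph_iso_P4 : triangle_free e -> ~ induced_subgraph claw e ->
  ~ induced_subgraph C4 e -> #|T| = 4 -> graph_iso e (path_graph 4).
Proof.
move=> tf noclaw noC4 cT; have gt2 : 2 < #|T| by rewrite cT.
have [x [v [y [exv evy exy xy]]]] := triangle_free_P3 tf gt2.
have [xv vy] := (adj_neq eirr exv, adj_neq eirr evy).
have [w] : exists w, w \notin [:: x; v; y] by apply: seq_notin; rewrite cT.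
rewrite !inE !negb_or => /and3P[wx wv wy].
have nvw : ~~ e v w.
  apply/negP => evw; apply: noclaw.
  have evx : e v x by rewrite esym.
  have nxw : ~~ e x w by apply/negP => exw; exact: (tf _ _ _ exv evw exw).
  have nyw : ~~ e y w by apply/negP => eyw; exact: (tf _ _ _ evy eyw evw).
  by apply: (induced_claw evx evy evw exy nxw nyw xy); rewrite eq_sym.
have [u ewu] : exists u, e w u.
  have xw : x \notin [set w] by rewrite inE eq_sym.
  by have [z [u [/set1P-> _ ezu]]] := connected_exit conn (set11 w) xw; exists u.
have : u \in [:: x; v; y; w].
  by apply: uniq_size_card_mem; rewrite ?cT //= !inE !negb_or xv xy vy !(eq_sym _ w) wx wv wy.
rewrite !inE => /or4P[] /eqP Eu; rewrite {u}Eu in ewu.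
- have nwv : ~~ e w v by rewrite esym.
  have [ewy | nwy] := boolP (e w y).
    by case: noC4; apply: (induced_C4 exv evy _ ewu exy nvw xy); rewrite (esym, eq_sym).
  by apply: induced_graph_iso (induced_P4 ewu exv evy nwv nwy exy wv wy xy) _; rewrite card_ord cT.
- by rewrite esym ewu in nvw.
- have [ewx | nwx] := boolP (e w x).
    by case: noC4; apply: (induced_C4 exv evy _ ewx exy nvw xy); rewrite (esym, eq_sym).
  have eyw : e y w by rewrite esym.
  have nxw : ~~ e x w by rewrite esym.
  have xw : x != w by rewrite eq_sym.
  by apply: induced_graph_iso (induced_P4 exv evy eyw exy nxw nvw xy xw _) _;
    rewrite ?card_ord ?cT // eq_sym.
- by rewrite eirr in ewu.
Qed.

End SmallSubgraphs.

Section FunctionalOrientation.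
Variable T : finType.
Implicit Types (F : rel T) (R : {set T}).

(* [g x = Some y] orients [x -> y]; every vertex gets out-degree at most one. *)
Definition functional_orientation F (g : T -> option T) :=
  (forall x y, g x = Some y -> F x y) /\
  (forall x y, F x y -> (g x == Some y) != (g y == Some x)).

Definition rem_edge F c d : rel T :=
  fun x y => F x y && ~~ (((x == c) && (y == d)) || ((x == d) && (y == c))).

Lemma rem_edgeC F c d : rem_edge F c d =2 rem_edge F d c.
Proof. by move=> x y; rewrite /rem_edge orbC. Qed.

Lemma rem_edge_sym F c d : symmetric F -> symmetric (rem_edge F c d).
Proof.
move=> Fs x y; rewrite /rem_edge Fs.
by case: (x == c); case: (y == d); case: (x == d); case: (y == c).
Qed.

Lemma rem_edge_irr F c d : irreflexive F -> irreflexive (rem_edge F c d).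
Proof. by move=> Fi x; rewrite /rem_edge Fi. Qed.

Lemma rem_edge_sub F c d : subrel (rem_edge F c d) F.
Proof. by move=> x y /andP[]. Qed.

Lemma rem_edge_cycle F c d s : is_cycle (rem_edge F c d) s -> is_cycle F s.
Proof. by case/and3P=> us ss cs; rewrite /is_cycle us ss (sub_cycle (@rem_edge_sub F c d)). Qed.

Lemma functional_orientation_add F c d g : irreflexive F -> F c d ->
  functional_orientation (rem_edge F c d) g -> g c = None ->
  functional_orientation F (fun x => if x == c then Some d else g x).
Proof.
move=> Firr Fcd [H1 H2] gc; split.
  by move=> x y; case: eqP => [-> [<-] //| _ /H1 /andP[]].
move=> x y Fxy.
have gdc : (g d == Some c) = false.
  by apply/negbTE/negP=> /eqP /H1; rewrite /rem_edge !eqxx orbT andbF.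
case: (eqVneq x c) => [xc | xc]; case: (eqVneq y c) => [yc | yc].
- by rewrite xc yc Firr in Fxy.
- subst x; rewrite (inj_eq (@Some_inj _)).
  case: (eqVneq d y) => [<- | yd]; first by rewrite gdc.
  have := H2 c y; rewrite /rem_edge Fxy eqxx (eq_sym y d) (negbTE yd) (negbTE yc) !andbF gc.
  by move=> /(_ isT).
- subst y; rewrite (inj_eq (@Some_inj _)).
  case: (eqVneq d x) => [<- | xd]; first by rewrite gdc.
  have := H2 x c; rewrite /rem_edge Fxy (negbTE xc) eqxx andbT (eq_sym x d) (negbTE xd) /= gc.
  by move=> /(_ isT); case: (g x == Some c).
- by have := H2 x y; rewrite /rem_edge Fxy (negbTE xc) (negbTE yc) !andbF /=; apply.
Qed.

Definition separated F R := forall r r', r \in R -> r' \in R -> connect F r r' -> r = r'.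

Lemma separated_setU1 F R u : symmetric F -> separated F R ->
  (forall r, r \in R -> ~~ connect F r u) -> separated F (u |: R).
Proof.
move=> Fs HR noR r r'; have csym := sym_connect_sym Fs.
rewrite !inE => /predU1P[->|rR] /predU1P[->|r'R] Hc //.
- by rewrite csym in Hc; have := noR r' r'R; rewrite Hc.
- by have := noR r rR; rewrite Hc.
- exact: HR.
Qed.

Lemma separated_sub F1 F2 R : subrel F1 F2 -> separated F2 R -> separated F1 R.
Proof.
move=> sub HR r r' rR r'R /connect_sub Hc; apply: HR => //; apply: Hc => x y /sub.
exact: connect1.
Qed.

Lemma acyclic_rem_edge F u v : symmetric F -> irreflexive F ->
  (forall s, ~~ is_cycle F s) -> F u v -> ~~ connect (rem_edge F u v) u v.
Proof.
move=> Fs Firr Fa Fuv; apply/negP => /connectP[p pp Hl].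
have uv : u != v by apply: contraTneq Fuv => ->; rewrite Firr.
case: (shortenP pp) Hl => p' pp' up' _ {p pp}.
case: p' pp' up' => [|w [|w' p]] pp' up' /= Hl.
- by rewrite Hl eqxx in uv.
- by move: pp'; rewrite /= -Hl /rem_edge !eqxx andbF.
move/negP: (Fa [:: u, w, w' & p]); apply; rewrite /is_cycle up' /=.
change (path F u (rcons [:: w, w' & p] u)).
by rewrite rcons_path (sub_path (@rem_edge_sub F u v) pp') /= -Hl Fs Fuv.
Qed.

Lemma rem_edge_card F c d : F c d ->
  #|[set p : T * T | rem_edge F c d p.1 p.2]| < #|[set p : T * T | F p.1 p.2]|.
Proof.
move=> Fcd; apply: proper_card; apply/properP; split.
  by apply/subsetP => p; rewrite !inE => /andP[].
by exists (c, d); rewrite !inE /= ?Fcd // /rem_edge !eqxx andbF.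
Qed.

Lemma forest_orientation_step F R u v
  (IHF : forall R, separated (rem_edge F u v) R ->
         exists g, functional_orientation (rem_edge F u v) g /\ forall r, r \in R -> g r = None) :
  symmetric F -> irreflexive F -> F u v -> separated F R ->
  (forall r, r \in R -> ~~ connect (rem_edge F u v) r u) ->
  exists g, functional_orientation F g /\ forall r, r \in R -> g r = None.
Proof.
move=> Fs Fi Fuv HR noR.
have uR : u \notin R by apply/negP => uR; have := noR u uR; rewrite connect0.
have HR' := separated_setU1 (rem_edge_sym u v Fs) (separated_sub (@rem_edge_sub F u v) HR) noR.
have [g [Hg gR]] := IHF _ HR'.
exists (fun x => if x == u then Some v else g x); split.
  by apply: functional_orientation_add => //; apply: gR; rewrite setU11.
move=> r rR; have -> : (r == u) = false by apply: contraNF uR => /eqP <-.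
by apply: gR; rewrite setU1r.
Qed.

(* Induction on the number of edges: remove an edge [uv] and orient it away from the
   endpoint whose component (in the smaller forest) contains no root of [R]. *)
Lemma forest_functional_orientation n F : #|[set p : T * T | F p.1 p.2]| <= n ->
  symmetric F -> irreflexive F -> (forall s, ~~ is_cycle F s) ->
  forall R, separated F R ->
  exists g, functional_orientation F g /\ forall r, r \in R -> g r = None.
Proof.
elim: n F => [|n IH] F cF Fs Fi Fa R HR;
  (have [/existsP[[u v] /= Fuv] | /existsPn noF] := boolP [exists p : T * T, F p.1 p.2];
   last by exists (fun _ => None); split=> //; split=> // x y Fxy; have := noF (x, y); rewrite Fxy).
  by move: cF; rewrite leqn0 cards_eq0 => /eqP/setP/(_ (u, v)); rewrite !inE Fuv.
have IHF c d : F c d -> forall R, separated (rem_edge F c d) R ->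
    exists g, functional_orientation (rem_edge F c d) g /\ forall r, r \in R -> g r = None.
  move=> Fcd; apply: IH; first by rewrite -ltnS (leq_trans (rem_edge_card Fcd)).
  - exact: rem_edge_sym.
  - exact: rem_edge_irr.
  - by move=> s; apply/negP => /rem_edge_cycle; apply/negP.
have [/existsP[r0 /andP[r0R r0u]] | /existsPn noR] :=
  boolP [exists r, (r \in R) && connect (rem_edge F u v) r u]; last first.
  by apply: (forest_orientation_step (IHF u v Fuv)) => // r rR; have := noR r; rewrite rR.
have Fvu : F v u by rewrite Fs.
apply: (forest_orientation_step (IHF v u Fvu)) => // r rR; rewrite -(eq_connect (rem_edgeC F u v)).
apply/negP => rv; have csym := sym_connect_sym (rem_edge_sym u v Fs).
have sub := connect_sub (fun x y (Fxy : rem_edge F u v x y) => connect1 (rem_edge_sub Fxy)).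
(* [r0 - u - v - r] joins two roots in [F]. *)
have E : r0 = r.
  by apply: HR => //; apply: connect_trans (sub _ _ r0u) (connect_trans (connect1 Fuv) _);
    rewrite -(sym_connect_sym Fs) sub // csym.
move/negP: (acyclic_rem_edge Fs Fi Fa Fuv); apply.
by rewrite csym in r0u; apply: connect_trans r0u _; rewrite E.
Qed.

(* Removing an edge [uv] of the unique cycle leaves a forest; orient it with [u] as a
   root, and then [u -> v]. *)
Lemma pseudotree_functional_orientation F : symmetric F -> irreflexive F -> pseudotree F ->
  exists g, functional_orientation F g.
Proof.
move=> Fs Fi [_ Hc].
have [[s cs] | nc] := classic (exists s, is_cycle F s); last first.
  have Fa s : ~~ is_cycle F s by apply/negP => cs; apply: nc; exists s.
  have HR : separated F set0 by move=> r r'; rewrite inE.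
  by have [g [Hg _]] := forest_functional_orientation (leqnn _) Fs Fi Fa HR; exists g.
case: s cs => [|u r] cs; first by case/and3P: cs.
set v := next (u :: r) u.
have Fuv : F u v by apply: next_cycle (mem_head _ _); case/and3P: cs.
have Fa s : ~~ is_cycle (rem_edge F u v) s.
  apply/negP => cs'; have /and3P[_ _ cc] := cs'.
  have := Hc _ _ cs (rem_edge_cycle cs') u v; rewrite /cycle_edge mem_head eqxx /=.
  case/esym/andP => us /orP[] /eqP E.
    by have := next_cycle cc us; rewrite E /rem_edge !eqxx andbF.
  by have := prev_cycle cc us; rewrite E /rem_edge !eqxx orbT andbF.
have HR : separated (rem_edge F u v) [set u] by move=> r1 r2 /set1P-> /set1P->.
have [g [Hg gu]] :=
  forest_functional_orientation (leqnn _) (rem_edge_sym u v Fs) (rem_edge_irr u v Fi) Fa HR.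
exists (fun x => if x == u then Some v else g x).
by apply: functional_orientation_add => //; apply: gu; rewrite inE.
Qed.

End FunctionalOrientation.

(* Every out-neighbourhood has at most one vertex: [(a, x) -> (b, g x)] with [b] the
   unique neighbour of [a]. *)
Lemma functional_orientation_direct_prod (T1 T2 : finType) (e1 : rel T1) (e2 : rel T2) g :
  symmetric e1 -> (forall a b c, e1 a b -> e1 a c -> b = c) ->
  functional_orientation e2 g -> one_perfectly_orientable (direct_prod e1 e2).
Proof.
move=> e1s uniq_nbr [g_e2 g_ori].
exists (fun x y => e1 x.1 y.1 && (g x.2 == Some y.2)); split; [split|].
- by move=> [a b] [c d]; rewrite /direct_prod /= => /andP[-> /eqP /g_e2 ->].
- move=> [a b] [c d]; rewrite /direct_prod /= => /andP[e1ac e2bd].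
  by rewrite [e1 c a]e1s e1ac /=; exact: g_ori.
- move=> [a b] [x1 x2] [y1 y2] /= /andP[ea1 /eqP g1] /andP[ea2 /eqP g2] xy.
  have E1 := uniq_nbr _ _ _ ea1 ea2; rewrite g1 in g2; case: g2 => E2.
  by rewrite E1 E2 eqxx in xy.
Qed.

Lemma P2_neighbour_uniq (T : finType) (e : rel T) : graph_iso e (path_graph 2) ->
  forall a b c, e a b -> e a c -> b = c.
Proof.
case=> f [fb Hf] a b c; rewrite -!Hf => h1 h2; apply: (bij_inj fb).
move: (f a) (f b) (f c) h1 h2.
by move=> [[|[|?]] ?] [[|[|?]] ?] [[|[|?]] ?] //= _ _; apply: ord_inj.
Qed.

Lemma card_le2_triangle_free (T : finType) (e : rel T) :
  irreflexive e -> #|T| <= 2 -> triangle_free e.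
Proof.
move=> ei cT a b c eab ebc eac.
have u : uniq [:: a; b; c] by rewrite /= !inE negb_or !(adj_neq ei).
by have := leq_trans (max_card (mem [:: a; b; c])) cT; rewrite (card_uniqP u).
Qed.

Lemma K2_direct_prod_pseudotree (T1 T2 : finType) (e1 : rel T1) (e2 : rel T2) :
  simple_graph e1 -> simple_graph e2 -> connected_graph e1 -> connected_graph e2 ->
  #|T1| = 2 -> one_perfectly_orientable (direct_prod e1 e2) -> pseudotree e2.
Proof.
move=> [e1s e1i] [e2s e2i] cG cH c2 [o Ho].
apply: (sparse_pseudotree e2s e2i cH) => R.
have [S [cS HS]] : exists S : {set T1}, #|S| = 2 /\ 2 * 2.-1 <= #|arcs e1 S|.
  by apply: (connected_arcs_subset e1s cG); rewrite c2.
have tf : triangle_free e1 by apply: card_le2_triangle_free; rewrite ?c2.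
have := one_perfect_direct_prod_arcs S R Ho (or_introl tf); rewrite cS.
have : 2 * #|arcs e2 R| <= #|arcs e1 S| * #|arcs e2 R| by rewrite leq_mul2r HS orbT.
by move=> /leq_trans/[apply]; rewrite leq_pmul2l.
Qed.

Lemma not_1po_induced (A B T1 T2 : finType) (eA : rel A) (eB : rel B) (e1 : rel T1)
  (e2 : rel T2) : ~ one_perfectly_orientable (direct_prod eA eB) ->
  induced_subgraph eA e1 -> induced_subgraph eB e2 ->
  ~ one_perfectly_orientable (direct_prod e1 e2).
Proof. by move=> nAB HA HB /(induced_1po (induced_direct_prod HA HB)). Qed.

Lemma triangle_free_factor (T1 T2 : finType) (e1 : rel T1) (e2 : rel T2) :
  simple_graph e1 -> simple_graph e2 -> connected_graph e2 -> 2 < #|T2| ->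
  one_perfectly_orientable (direct_prod e1 e2) -> triangle_free e1.
Proof.
move=> [e1s e1i] [e2s e2i] cH n2 H a b c eab ebc eac.
have HK := induced_K3 e1s e1i eab ebc eac.
case: (induced_K3_or_P3 e2s e2i cH n2) => H2.
  exact: not_1po_induced K3_K3_not_1po HK H2 H.
exact: not_1po_induced K3_P3_not_1po HK H2 H.
Qed.

Lemma direct_prod_card_bound (T1 T2 : finType) (e1 : rel T1) (e2 : rel T2) :
  simple_graph e1 -> simple_graph e2 -> connected_graph e1 -> connected_graph e2 ->
  triangle_free e1 -> one_perfectly_orientable (direct_prod e1 e2) ->
  2 * (#|T1|.-1 * #|T2|.-1) <= #|T1| * #|T2|.
Proof.
move=> [e1s _] [e2s _] cG cH tf [o Ho].
case: (posnP #|T1|) => [-> //|p1]; case: (posnP #|T2|) => [->|p2]; first by rewrite /= !muln0.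
have [S [cS HS]] : exists S : {set T1}, #|S| = #|T1| /\ 2 * #|T1|.-1 <= #|arcs e1 S|.
  by apply: (connected_arcs_subset e1s cG); rewrite p1 leqnn.
have [R [cR HR]] : exists R : {set T2}, #|R| = #|T2| /\ 2 * #|T2|.-1 <= #|arcs e2 R|.
  by apply: (connected_arcs_subset e2s cH); rewrite p2 leqnn.
have := one_perfect_direct_prod_arcs S R Ho (or_introl tf); rewrite cS cR.
have := leq_mul HS HR; nia.
Qed.

Lemma card_bound_cases k m : 2 < k -> 2 < m -> 2 * (k.-1 * m.-1) <= k * m ->
  (k = 3 /\ m = 4) \/ (k = 4 /\ m = 3) \/ (k = 3 /\ m = 3).
Proof. nia. Qed.

Lemma P4_factor (T1 T2 : finType) (e1 : rel T1) (e2 : rel T2) :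
  simple_graph e1 -> connected_graph e1 -> triangle_free e1 -> induced_subgraph (path_graph 3) e2 ->
  #|T1| = 4 -> one_perfectly_orientable (direct_prod e1 e2) -> graph_iso e1 (path_graph 4).
Proof.
move=> [e1s e1i] cG tf HP c4 H; apply: (graph_iso_P4 e1s e1i cG tf _ _ c4) => [Hc | HC].
  exact: not_1po_induced claw_P3_not_1po Hc HP H.
exact: not_1po_induced C4_P3_not_1po HC HP H.
Qed.

Lemma large_factors (T1 T2 : finType) (e1 : rel T1) (e2 : rel T2) :
  simple_graph e1 -> simple_graph e2 -> connected_graph e1 -> connected_graph e2 ->
  2 < #|T1| -> 2 < #|T2| -> one_perfectly_orientable (direct_prod e1 e2) ->
  [\/ graph_iso e1 (path_graph 3) /\ graph_iso e2 (path_graph 4),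
      graph_iso e2 (path_graph 3) /\ graph_iso e1 (path_graph 4)
    | graph_iso e1 (path_graph 3) /\ graph_iso e2 (path_graph 3)].
Proof.
move=> hG hH cG cH n1 n2 H; have H' := direct_prodC_1po H.
have tf1 := triangle_free_factor hG hH cH n2 H.
have tf2 := triangle_free_factor hH hG cG n1 H'.
have P3G := triangle_free_induced_P3 hG.1 hG.2 cG tf1 n1.
have P3H := triangle_free_induced_P3 hH.1 hH.2 cH tf2 n2.
have iso3 (T : finType) (e : rel T) : simple_graph e -> connected_graph e ->
    triangle_free e -> #|T| = 3 -> graph_iso e (path_graph 3).
  by move=> [es ei]; exact: graph_iso_P3.
have := card_bound_cases n1 n2 (direct_prod_card_bound hG hH cG cH tf1 H).
case=> [[c1 c2] | [[c1 c2] | [c1 c2]]].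
- by apply: Or31; split; [exact: iso3 | exact: P4_factor hH cH tf2 P3G c2 H'].
- by apply: Or32; split; [exact: iso3 | exact: P4_factor hG cG tf1 P3H c1 H].
- by apply: Or33; split; exact: iso3.
Qed.

Lemma K2_pseudotree_1po (T1 T2 : finType) (e1 : rel T1) (e2 : rel T2) :
  simple_graph e1 -> simple_graph e2 -> graph_iso e1 (path_graph 2) -> pseudotree e2 ->
  one_perfectly_orientable (direct_prod e1 e2).
Proof.
move=> [e1s _] [e2s e2i] iso2 pt.
have [g Hg] := pseudotree_functional_orientation e2s e2i pt.
exact: functional_orientation_direct_prod e1s (P2_neighbour_uniq iso2) Hg.
Qed.

Lemma graph_iso_direct_prod_1po (A B T1 T2 : finType) (eA : rel A) (eB : rel B)
  (e1 : rel T1) (e2 : rel T2) : graph_iso e1 eA -> graph_iso e2 eB ->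
  one_perfectly_orientable (direct_prod eA eB) -> one_perfectly_orientable (direct_prod e1 e2).
Proof.
by move=> i1 i2; apply/induced_1po/induced_direct_prod; apply: graph_iso_induced.
Qed.

Theorem proposition10 (T1 T2 : finType) (e1 : rel T1) (e2 : rel T2)
  (hG : simple_graph e1) (hH : simple_graph e2)
  (cG : connected_graph e1) (cH : connected_graph e2)
  (nG : 1 < #|T1|) (nH : 1 < #|T2|) :
  one_perfectly_orientable (direct_prod e1 e2) <->
  [\/ (graph_iso e1 (path_graph 2) /\ pseudotree e2)
      \/ (graph_iso e2 (path_graph 2) /\ pseudotree e1),
      (graph_iso e1 (path_graph 3) /\ graph_iso e2 (path_graph 4))
      \/ (graph_iso e2 (path_graph 3) /\ graph_iso e1 (path_graph 4))
    | graph_iso e1 (path_graph 3) /\ graph_iso e2 (path_graph 3)].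
Proof.
split=> [H | ].
  have H' := direct_prodC_1po H.
  have [c1 | n1] := eqVneq #|T1| 2.
    apply: Or31; left; split; first exact: graph_iso_P2 hG.1 hG.2 cG c1.
    exact: K2_direct_prod_pseudotree hG hH cG cH c1 H.
  have [c2 | n2] := eqVneq #|T2| 2.
    apply: Or31; right; split; first exact: graph_iso_P2 hH.1 hH.2 cH c2.
    exact: K2_direct_prod_pseudotree hH hG cH cG c2 H'.
  have n1' : 2 < #|T1| by rewrite ltn_neqAle eq_sym n1 nG.
  have n2' : 2 < #|T2| by rewrite ltn_neqAle eq_sym n2 nH.
  by case: (large_factors hG hH cG cH n1' n2' H) => h;
    [apply: Or32; left | apply: Or32; right | apply: Or33].
case=> [[[i1 pt] | [i2 pt]] | [[i1 i2] | [i2 i1]] | [i1 i2]].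
- exact: K2_pseudotree_1po hG hH i1 pt.
- exact/direct_prodC_1po/(K2_pseudotree_1po hH hG i2 pt).
- exact: graph_iso_direct_prod_1po i1 i2 P3_P4_1po.
- exact/direct_prodC_1po/(graph_iso_direct_prod_1po i2 i1 P3_P4_1po).
- exact: graph_iso_direct_prod_1po i1 i2 P3_P3_1po.
Qed.
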